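(* Each of the following real polynomial systems has an isochronous center at the origin $O$, with the indicated Urabe function $h$ (in each system with $\pm,\mp$ signs, the upper signs are taken throughout, or the lower signs are taken throughout): (i) $\dot x=-y+3x^{2}y\pm\sqrt2\,x^{3}y$, $\dot y=x\pm\sqrt2\,x^{2}\mp\frac{\sqrt2}{2}y^{2}+x^{3}+4xy^{2}\pm2\sqrt2\,x^{2}y^{2}\pm\frac{\sqrt2}{4}x^{4}$, with $h(\xi)=\mp\dfrac{\xi}{\sqrt{2+9\xi^{2}}}$; (ii) $\dot x=-y+x^{3}y$, $\dot y=x+\frac12x^{2}y^{2}-\frac12x^{4}$, with $h(\xi)=\dfrac{\xi^{3}}{\sqrt{4+\xi^{6}}}$.
   Context: For a real planar polynomial system $\dot x=-y+A(x,y)$, $\dot y=x+B(x,y)$, with $A,B$ polynomials having no terms of degree $<2$, the origin $O$ is a center if there is a punctured neighborhood of $O$ in which every orbit is a closed orbit surrounding $O$; it is an isochronous center if moreover all these closed orbits have the same period. Urabe function: consider a system $\dot x=p_0(x)+p_1(x)y$, $\dot y=q_0(x)+q_1(x)y+q_2(x)y^2$ with $p_i,q_i$ real polynomials, $p_0(0)=q_0(0)=0$, $p_1(0)\neq0$, and such that $-\frac{p_1'p_0}{p_1}+q_1+p_0'-\frac{2q_2p_0}{p_1}\equiv0$ (this holds automatically when $p_0\equiv q_1\equiv0$). Put $f=-\frac{q_2+p_1'}{p_1}$, $g=-\frac{q_2p_0^2}{p_1}+q_1p_0-p_1q_0$; the change of variables $z=p_0(x)+p_1(x)y$ transforms the system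 into $\dot x=z$, $\dot z=-g(x)-f(x)z^2$. Let $F(x)=\int_0^xf(s)\,ds$ and let $\xi$ be defined near $0$ by $\frac12\xi(x)^2=\int_0^xg(s)e^{2F(s)}ds$ with $x\xi(x)>0$ for $x\ne0$. When $O$ is an isochronous center, its Urabe function is the odd real-analytic function $h$ defined near $0$ satisfying $\dfrac{\xi(x)}{1+h(\xi(x))}=g(x)e^{F(x)}$ for $x$ near $0$. Here both systems have $p_0\equiv q_1\equiv0$. *)

From Stdlib Require Import Reals Lra.
Open Scope R_scope.

Definition is_solution (P Q : R -> R -> R) (x y : R -> R) : Prop :=
  forall t, derivable_pt_lim x t (P (x t) (y t)) /\
            derivable_pt_lim y t (Q (x t) (y t)).

Definition min_period (x y : R -> R) (T : R) : Prop :=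
  0 < T /\
  (forall t, x (t + T) = x t /\ y (t + T) = y t) /\
  (forall s, 0 < s < T -> (x s, y s) <> (x 0, y 0)).

(** The closed curve t in [0,T] |-> (x t, y t) surrounds the origin:
    it avoids O and has nonzero winding number around O, i.e. a continuous
    lift of the polar angle changes over one period. *)
Definition surrounds_origin (x y : R -> R) (T : R) : Prop :=
  (forall t, (x t, y t) <> (0, 0)) /\
  exists theta : R -> R,
    (forall t, continuity_pt theta t) /\
    (forall t, x t = sqrt (x t ^ 2 + y t ^ 2) * cos (theta t) /\
               y t = sqrt (x t ^ 2 + y t ^ 2) * sin (theta t)) /\
    theta T <> theta 0.

Definition closed_orbit_through (P Q : R -> R -> R) (a b T : R) : Prop :=
  exists x y : R -> R,
    is_solution P Q x y /\ x 0 = a /\ y 0 = b /\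
    min_period x y T /\ surrounds_origin x y T.

Definition is_center (P Q : R -> R -> R) : Prop :=
  exists delta, 0 < delta /\
    forall a b, 0 < a ^ 2 + b ^ 2 < delta ^ 2 ->
      exists T, closed_orbit_through P Q a b T.

Definition is_isochronous_center (P Q : R -> R -> R) : Prop :=
  exists delta T, 0 < delta /\
    forall a b, 0 < a ^ 2 + b ^ 2 < delta ^ 2 ->
      closed_orbit_through P Q a b T.

Definition analytic_near0 (h : R -> R) : Prop :=
  exists (a : nat -> R) (r : R), 0 < r /\
    forall u, Rabs u < r -> Pser a u (h u).

(** h is the Urabe function associated with f and g (case p0 = q1 = 0):
    F = int_0^x f, Phi = int_0^x g e^{2F}, (1/2) xi^2 = Phi, x xi(x) > 0,
    and xi/(1 + h(xi)) = g e^F near 0; h odd and real-analytic. *)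
Definition is_urabe_function (f g h : R -> R) : Prop :=
  (forall u, h (- u) = - h u) /\ analytic_near0 h /\
  exists eps, 0 < eps /\
  exists F Phi xi : R -> R,
    F 0 = 0 /\ Phi 0 = 0 /\
    forall x, - eps < x < eps ->
      derivable_pt_lim F x (f x) /\
      derivable_pt_lim Phi x (g x * exp (2 * F x)) /\
      / 2 * xi x ^ 2 = Phi x /\
      (x <> 0 -> 0 < x * xi x) /\
      xi x / (1 + h (xi x)) = g x * exp (F x).

(** f and g from p1, p1', q0, q2 when p0 = q1 = 0. *)
Definition urabe_f (p1 dp1 q2 : R -> R) (x : R) : R := - (q2 x + dp1 x) / p1 x.
Definition urabe_g (p1 q0 : R -> R) (x : R) : R := - (p1 x * q0 x).

(** System (i); s = 1 for upper signs, s = -1 for lower signs. *)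
Definition P1 (s x y : R) : R := - y + 3 * x ^ 2 * y + s * sqrt 2 * x ^ 3 * y.
Definition Q1 (s x y : R) : R :=
  x + s * sqrt 2 * x ^ 2 - s * (sqrt 2 / 2) * y ^ 2 + x ^ 3 + 4 * x * y ^ 2
  + s * 2 * sqrt 2 * x ^ 2 * y ^ 2 + s * (sqrt 2 / 4) * x ^ 4.
Definition p1_1 (s x : R) : R := -1 + 3 * x ^ 2 + s * sqrt 2 * x ^ 3.
Definition dp1_1 (s x : R) : R := 6 * x + 3 * s * sqrt 2 * x ^ 2.
Definition q0_1 (s x : R) : R := x + s * sqrt 2 * x ^ 2 + x ^ 3 + s * (sqrt 2 / 4) * x ^ 4.
Definition q2_1 (s x : R) : R := - s * (sqrt 2 / 2) + 4 * x + s * 2 * sqrt 2 * x ^ 2.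
Definition h1 (s u : R) : R := - s * u / sqrt (2 + 9 * u ^ 2).

Definition P2 (x y : R) : R := - y + x ^ 3 * y.
Definition Q2 (x y : R) : R := x + / 2 * x ^ 2 * y ^ 2 - / 2 * x ^ 4.
Definition p1_2 (x : R) : R := -1 + x ^ 3.
Definition dp1_2 (x : R) : R := 3 * x ^ 2.
Definition q0_2 (x : R) : R := x - / 2 * x ^ 4.
Definition q2_2 (x : R) : R := / 2 * x ^ 2.
Definition h2 (u : R) : R := u ^ 3 / sqrt (4 + u ^ 6).

(* After the substitution  x = X u,  y = v K u  (X and K explicit), each system becomes
   the reparametrized harmonic oscillator  u' = v / (1 + h u),  v' = - u / (1 + h u)
   where h is the announced Urabe function.  On the circle  u = rho cos psi,
   v = - rho sin psi  the phase obeys  psi' = 1 / (1 + h (rho cos psi)),  so one turn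
   lasts  int_0^(2 pi) (1 + h (rho cos p)) dp = 2 pi  because h is odd: all orbits near O
   are closed and have period 2 pi.  The Urabe relation is checked on closed forms of
   F, Phi and xi, and h is analytic since it is a monomial times (1 + c u^m)^(-1/2),
   whose binomial series converges for |c u^m| <= 1/4. *)

From Stdlib Require Import Reals Ranalysis5 Lra Lia Nsatz ClassicalEpsilon FunctionalExtensionality.
From Coquelicot Require Import Coquelicot.
Open Scope R_scope.

(** * Calculus on the real line *)

Lemma constant_of_derivable_pt_lim_0 (f : R -> R) :
  (forall x, derivable_pt_lim f x 0) -> forall a b, f a = f b.
Proof.
  intros Hf. apply (null_derivative_1 f (fun x => exist _ 0 (Hf x))).
  intros x; reflexivity.
Qed.

Lemma derivable_pt_lim_RInt (k : R -> R) :
  (forall x, continuity_pt k x) ->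
  forall x, derivable_pt_lim (fun y => RInt k 0 y) x (k x).
Proof.
  intros Hk x. apply is_derive_Reals, (is_derive_RInt k _ 0).
  - apply filter_forall; intros y. apply (RInt_correct (V := R_CompleteNormedModule)), ex_RInt_continuous.
    intros z _. apply continuity_pt_filterlim, Hk.
  - apply continuity_pt_filterlim, Hk.
Qed.

Lemma ex_derive_of_lim (f : R -> R) x l : derivable_pt_lim f x l -> ex_derive f x.
Proof. intros H. exists l. now apply is_derive_Reals. Qed.

(* Stated for the eta-expanded function, the form produced by [auto_derive]. *)
Lemma Derive_of_lim (f : R -> R) x l : derivable_pt_lim f x l -> Derive (fun y => f y) x = l.
Proof. intros H. now apply is_derive_unique, is_derive_Reals. Qed.

Lemma continuity_pt_of_ex_derive (f : R -> R) x : ex_derive f x -> continuity_pt f x.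
Proof. intros H. now apply continuity_pt_filterlim, (ex_derive_continuous (V := R_NormedModule)). Qed.

Section IncreasingInverse.
Variables (G k : R -> R) (m : R).
Hypothesis m_pos : 0 < m.
Hypothesis G_deriv : forall x, derivable_pt_lim G x (k x).
Hypothesis k_ge : forall x, m <= k x.

Lemma deriv_ge_increment a b : a <= b -> m * (b - a) <= G b - G a.
Proof.
  intros [Hab | <-]; [|lra].
  destruct (MVT_cor2 G k a b Hab) as [c [-> _]]; [intros; apply G_deriv|].
  apply Rmult_le_compat_r; [lra | apply k_ge].
Qed.

Lemma deriv_ge_lt a b : a < b -> G a < G b.
Proof. intros Hab. pose proof (deriv_ge_increment a b (Rlt_le _ _ Hab)). nra. Qed.

Lemma deriv_continuity_pt x : continuity_pt G x.
Proof. apply derivable_continuous_pt. exists (k x). apply G_deriv. Qed.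

Lemma deriv_ge_surj t : exists p, G p = t.
Proof.
  set (A := Rabs (t - G 0) / m + 1).
  assert (HmA : m * A = Rabs (t - G 0) + m) by (unfold A; field; lra).
  assert (HA : 0 < A).
  { unfold A. pose proof (Rabs_pos (t - G 0)).
    assert (0 <= Rabs (t - G 0) / m) by (apply Rdiv_le_0_compat; lra). lra. }
  pose proof (deriv_ge_increment 0 A ltac:(lra)) as Hup.
  pose proof (deriv_ge_increment (- A) 0 ltac:(lra)) as Hlow.
  destruct (IVT_interv (fun y => G y - t) (- A) A) as [z [_ Hz]].
  - intros. apply continuity_pt_minus; [apply deriv_continuity_pt | apply continuity_pt_const].
    intros ? ?; reflexivity.
  - lra.
  - revert Hlow; split_Rabs; lra.
  - revert Hup; split_Rabs; lra.
  - exists z. simpl in Hz. lra.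
Qed.

Lemma deriv_ge_inverse : exists Ginv : R -> R,
  (forall t, G (Ginv t) = t) /\ (forall p, Ginv (G p) = p) /\
  (forall a b, a < b -> Ginv a < Ginv b) /\
  (forall t, derivable_pt_lim Ginv t (/ k (Ginv t))).
Proof.
  destruct (choice (fun t p => G p = t) deriv_ge_surj) as [Ginv HGinv].
  assert (Hinj : forall a b, G a = G b -> a = b).
  { intros a b E. destruct (Rtotal_order a b) as [h|[h|h]]; auto;
      apply deriv_ge_lt in h; lra. }
  assert (Hleft : forall p, Ginv (G p) = p) by (intros; apply Hinj, HGinv).
  assert (Hincr : forall a b, a < b -> Ginv a < Ginv b).
  { intros a b Hab. destruct (Rlt_le_dec (Ginv a) (Ginv b)) as [h|h]; auto.
    destruct h as [h | h].
    - apply deriv_ge_lt in h. rewrite !HGinv in h. lra.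
    - apply (f_equal G) in h. rewrite !HGinv in h. lra. }
  assert (Hmono : forall a b, a <= b -> Ginv a <= Ginv b).
  { intros a b [h| ->]; [left; auto | right; reflexivity]. }
  exists Ginv. split; [exact HGinv | split; [exact Hleft | split; [exact Hincr |]]].
  intros t.
  assert (Hcont : continuity_pt Ginv t).
  { apply (continuity_pt_recip_interv G Ginv (Ginv (t - 1)) (Ginv (t + 1))).
    - apply Hincr; lra.
    - intros x y _ Hxy _. now apply deriv_ge_lt.
    - intros x _ _. apply HGinv.
    - rewrite !HGinv. intros x Hx1 Hx2. split; apply Hmono; lra.
    - intros a _. apply deriv_continuity_pt.
    - rewrite !HGinv. lra. }
  assert (Hrange : Ginv (t - 1) <= Ginv t <= Ginv (t + 1)) by (split; apply Hmono; lra).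
  pose proof (derivable_pt_lim_recip_interv G Ginv (t - 1) (t + 1) t
    (fun a _ => exist _ (k a) (G_deriv a)) Hcont ltac:(lra) ltac:(lra) Hrange) as HD.
  simpl in HD. replace (/ k (Ginv t)) with (1 / k (Ginv t)) by (unfold Rdiv; ring).
  apply HD; [intros x _; apply HGinv |]. pose proof (k_ge (Ginv t)). lra.
Qed.
End IncreasingInverse.

Lemma primitive_odd_cos_periodic (h H : R -> R) (rho : R) :
  (forall u, h (- u) = - h u) -> H 0 = 0 ->
  (forall p, derivable_pt_lim H p (h (rho * cos p))) ->
  forall p, H (p + 2 * PI) = H p.
Proof.
  intros h_odd H0 HH.
  assert (H_odd : forall p, H (- p) = - H p).
  { intros p. enough (E : H p + H (- p) = H 0 + H (- 0)) by (rewrite Ropp_0, H0 in E; lra).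
    apply (constant_of_derivable_pt_lim_0 (fun q => H q + H (- q))). intros x.
    apply is_derive_Reals. auto_derive; [repeat split; eapply ex_derive_of_lim, HH |].
    rewrite !(Derive_of_lim _ _ _ (HH _)), cos_neg. ring. }
  assert (H_sym : forall p, H (PI - p) = H p).
  { intros p. enough (E : H p - H (PI - p) = H (PI / 2) - H (PI - PI / 2)).
    { replace (PI - PI / 2) with (PI / 2) in E by field. lra. }
    apply (constant_of_derivable_pt_lim_0 (fun q => H q - H (PI - q))). intros x.
    apply is_derive_Reals. auto_derive; [repeat split; eapply ex_derive_of_lim, HH |].
    rewrite !(Derive_of_lim _ _ _ (HH _)), (Rplus_comm PI), neg_cos, cos_neg, Ropp_mult_distr_r_reverse, h_odd.
    ring. }
  intros p.
  rewrite <- (H_sym (p + 2 * PI)).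
  replace (PI - (p + 2 * PI)) with (- (PI - - p)) by ring.
  rewrite H_odd, H_sym, H_odd. ring.
Qed.

Lemma exists_angle c s : c ^ 2 + s ^ 2 = 1 -> exists p, cos p = c /\ sin p = s.
Proof.
  intros H. assert (Hc : -1 <= c <= 1) by nra.
  assert (Hs : sqrt (1 - c²) = Rabs s).
  { rewrite <- sqrt_Rsqr_abs. f_equal. unfold Rsqr. lra. }
  destruct (Rle_dec 0 s) as [h|h].
  - exists (acos c). rewrite cos_acos, sin_acos by auto. rewrite Hs, Rabs_right; lra.
  - exists (- acos c). rewrite cos_neg, sin_neg, cos_acos, sin_acos by auto.
    rewrite Hs, Rabs_left; lra.
Qed.

Lemma cos_sin_shift_neq a d : 0 < d < 2 * PI ->
  cos (a + d) = cos a -> sin (a + d) = sin a -> False.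
Proof.
  intros Hd Hc Hs.
  assert (E : cos d = 1).
  { replace d with ((a + d) - a) by ring. rewrite cos_minus, Hc, Hs.
    rewrite <- (sin2_cos2 a). unfold Rsqr; ring. }
  replace d with (2 * (d / 2)) in E by field. rewrite cos_2a_sin in E.
  assert (0 < sin (d / 2)) by (apply sin_gt_0; lra). nra.
Qed.

(* Rotating (x, y) by -p lands in the right half-plane, where atan recovers the angle. *)
Lemma polar_angle_lift x y p : 0 < x * cos p + y * sin p ->
  let th := p + atan ((y * cos p - x * sin p) / (x * cos p + y * sin p)) in
  x = sqrt (x ^ 2 + y ^ 2) * cos th /\ y = sqrt (x ^ 2 + y ^ 2) * sin th.
Proof.
  intros HD th. set (D := x * cos p + y * sin p) in *. set (N := y * cos p - x * sin p).
  pose proof (sin2_cos2 p) as Hp. unfold Rsqr in Hp.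
  assert (E0 : D * D + N * N = x ^ 2 + y ^ 2).
  { transitivity ((x ^ 2 + y ^ 2) * (sin p * sin p + cos p * cos p)); [unfold D, N; ring | rewrite Hp; ring]. }
  assert (E1 : sqrt (1 + (N / D)²) = sqrt (x ^ 2 + y ^ 2) / D).
  { replace (1 + (N / D)²) with ((x ^ 2 + y ^ 2) / (D * D)) by (rewrite <- E0; unfold Rsqr; field; lra).
    rewrite sqrt_div_alt, sqrt_square by nra. reflexivity. }
  assert (Hr : 0 < sqrt (x ^ 2 + y ^ 2)) by (apply sqrt_lt_R0; rewrite <- E0; nra).
  unfold th. fold N D. rewrite cos_plus, sin_plus, cos_atan, sin_atan, E1. split.
  - transitivity (cos p * D - sin p * N).
    + unfold N, D. transitivity (x * (sin p * sin p + cos p * cos p)); [rewrite Hp | ]; ring.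
    + field. lra.
  - transitivity (sin p * D + cos p * N).
    + unfold N, D. transitivity (y * (sin p * sin p + cos p * cos p)); [rewrite Hp | ]; ring.
    + field. lra.
Qed.

Lemma Rabs_mult_cos_le rho p : 0 <= rho -> Rabs (rho * cos p) <= rho.
Proof.
  intros Hrho. rewrite Rabs_mult, (Rabs_pos_eq rho) by exact Hrho.
  pose proof (Rabs_le_between (cos p) 1) as [_ Hc]. pose proof (COS_bound p).
  specialize (Hc ltac:(lra)). nra.
Qed.

Lemma polar_coordinates u v : 0 < u ^ 2 + v ^ 2 ->
  exists p, u = sqrt (u ^ 2 + v ^ 2) * cos p /\ v = - sqrt (u ^ 2 + v ^ 2) * sin p.
Proof.
  intros Hpos. set (rho := sqrt (u ^ 2 + v ^ 2)).
  assert (Hrho2 : rho * rho = u ^ 2 + v ^ 2) by (apply sqrt_sqrt; lra).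
  assert (Hrho : 0 < rho) by (apply sqrt_lt_R0; lra).
  destruct (exists_angle (u / rho) (- v / rho)) as [p [Hc Hs]].
  { field_simplify; [| lra]. rewrite <- Hrho2. field. lra. }
  exists p. rewrite Hc, Hs. split; field; lra.
Qed.

(** * Isochronous centers conjugate to a reparametrized rotation *)

Section ConjugateCenter.
Variables (P Q : R -> R -> R) (p1 q0 q2 h X K : R -> R) (r0 kappa : R).
Hypothesis P_eq : forall x y, P x y = p1 x * y.
Hypothesis Q_eq : forall x y, Q x y = q0 x + q2 x * y ^ 2.
Hypothesis r0_pos : 0 < r0.
Hypothesis kappa_pos : 0 < kappa.
Hypothesis h_odd : forall u, h (- u) = - h u.
Hypothesis h_cont : forall u, continuity_pt h u.
Hypothesis h_ge : forall u, Rabs u <= r0 -> / 2 <= 1 + h u.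
(* The map (u, v) |-> (X u, v * K u) sends solutions of the reparametrized
   harmonic oscillator  u' = v / (1 + h u),  v' = - u / (1 + h u)  to solutions
   of  x' = P x y,  y' = Q x y. *)
Hypothesis X_0 : X 0 = 0.
Hypothesis X_deriv : forall u, derivable_pt_lim X u ((1 + h u) * p1 (X u) * K u).
Hypothesis K_deriv : forall u, derivable_pt_lim K u ((1 + h u) * q2 (X u) * K u ^ 2).
Hypothesis q0_X : forall u, - u * K u = (1 + h u) * q0 (X u).
Hypothesis p1_X_neg : forall u, Rabs u <= r0 -> p1 (X u) < 0.
Hypothesis K_le : forall u, Rabs u <= r0 -> K u <= - kappa.

Lemma X_increasing a b : - r0 <= a -> b <= r0 -> a < b -> X a < X b.
Proof.
  intros Ha Hb Hab.
  destruct (MVT_cor2 X (fun u => (1 + h u) * p1 (X u) * K u) a b Hab) as [c [Hc Hcab]].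
  { intros; apply X_deriv. }
  assert (Hcr : Rabs c <= r0) by (apply Rabs_le; lra).
  pose proof (h_ge c Hcr). pose proof (p1_X_neg c Hcr). pose proof (K_le c Hcr).
  assert (0 < (1 + h c) * (p1 (X c) * K c)) by (apply Rmult_lt_0_compat; nra).
  rewrite Rmult_assoc in Hc. nra.
Qed.

Lemma X_inj a b : Rabs a <= r0 -> Rabs b <= r0 -> X a = X b -> a = b.
Proof.
  intros Ha Hb E. apply Rabs_le_between in Ha, Hb.
  destruct (Rtotal_order a b) as [h'|[h'|h']]; auto;
    [pose proof (X_increasing a b) | pose proof (X_increasing b a)]; lra.
Qed.

Lemma X_mul_pos u : Rabs u <= r0 -> u <> 0 -> 0 < X u * u.
Proof.
  intros Hu Hu0. apply Rabs_le_between in Hu. rewrite <- X_0.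
  destruct (Rtotal_order u 0) as [h'|[h'|h']]; [| contradiction |].
  - pose proof (X_increasing u 0 ltac:(lra) ltac:(lra) h'). nra.
  - pose proof (X_increasing 0 u ltac:(lra) ltac:(lra) h'). nra.
Qed.

Section Orbit.
Variables (rho : R) (psi : R -> R).
Hypothesis rho_range : 0 < rho <= r0.
Hypothesis psi_deriv : forall t, derivable_pt_lim psi t (/ (1 + h (rho * cos (psi t)))).
Hypothesis psi_shift : forall t, psi (t + 2 * PI) = psi t + 2 * PI.
Hypothesis psi_increasing : forall a b, a < b -> psi a < psi b.

Let u t := rho * cos (psi t).
Let x t := X (u t).
Let y t := - rho * sin (psi t) * K (u t).

Let u_bound t : Rabs (u t) <= r0.
Proof. pose proof (Rabs_mult_cos_le rho (psi t)). unfold u. lra. Qed.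

Let speed_pos t : 0 < 1 + h (u t).
Proof. pose proof (h_ge _ (u_bound t)). lra. Qed.

Lemma orbit_is_solution : is_solution P Q x y.
Proof.
  intros t. pose proof (speed_pos t) as Hs. unfold x, y, u in *. split.
  - rewrite P_eq. apply is_derive_Reals. auto_derive.
    { repeat split; eapply ex_derive_of_lim; eauto. }
    rewrite (Derive_of_lim _ _ _ (psi_deriv t)), (Derive_of_lim _ _ _ (X_deriv _)).
    field. lra.
  - rewrite Q_eq. apply is_derive_Reals. auto_derive.
    { repeat split; eapply ex_derive_of_lim; eauto. }
    rewrite (Derive_of_lim _ _ _ (psi_deriv t)), (Derive_of_lim _ _ _ (K_deriv _)).
    pose proof (q0_X (rho * cos (psi t))) as E.
    replace (q0 (X (rho * cos (psi t)))) with
      (- (rho * cos (psi t)) * K (rho * cos (psi t)) / (1 + h (rho * cos (psi t)))) by (rewrite E; field; lra).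
    field. lra.
Qed.

Let cos_2PI_shift z : cos (z + 2 * PI) = cos z.
Proof. rewrite cos_plus, cos_2PI, sin_2PI. ring. Qed.

Let sin_2PI_shift z : sin (z + 2 * PI) = sin z.
Proof. rewrite sin_plus, cos_2PI, sin_2PI. ring. Qed.

Lemma orbit_min_period : min_period x y (2 * PI).
Proof.
  pose proof PI_RGT_0.
  split; [lra | split].
  - intros t. unfold x, y, u. now rewrite psi_shift, cos_2PI_shift, sin_2PI_shift.
  - intros s Hs E. injection E as Ex Ey.
    assert (Eu : u s = u 0) by (apply X_inj; auto).
    unfold y in Ey. fold (u s) (u 0) in Ey. rewrite Eu in Ey.
    assert (HK : K (u 0) <> 0) by (pose proof (K_le _ (u_bound 0)); lra).
    apply Rmult_eq_reg_r in Ey; [| exact HK].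
    unfold u in Eu.
    apply (cos_sin_shift_neq (psi 0) (psi s - psi 0)).
    + pose proof (psi_increasing 0 s ltac:(lra)).
      pose proof (psi_increasing s (0 + 2 * PI) ltac:(lra)).
      rewrite psi_shift in *. lra.
    + replace (psi 0 + (psi s - psi 0)) with (psi s) by ring.
      apply Rmult_eq_reg_l with rho; lra.
    + replace (psi 0 + (psi s - psi 0)) with (psi s) by ring.
      apply Rmult_eq_reg_l with (- rho); lra.
Qed.

(* (x, y) paired with the direction of angle psi is
   X(u) u / rho + rho (- K u) sin^2 psi, and the two terms cannot vanish together. *)
Let radial_pos t : 0 < x t * cos (psi t) + y t * sin (psi t).
Proof.
  unfold x, y. fold (u t).
  pose proof (K_le _ (u_bound t)). pose proof (sin2_cos2 (psi t)) as Hsc. unfold Rsqr in Hsc.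
  replace (X (u t) * cos (psi t)) with (X (u t) * u t / rho) by (unfold u; field; lra).
  replace (- rho * sin (psi t) * K (u t) * sin (psi t))
    with (rho * (- K (u t)) * (sin (psi t) * sin (psi t))) by ring.
  destruct (Req_dec (u t) 0) as [Hu | Hu].
  - assert (cos (psi t) = 0) by (unfold u in Hu; apply Rmult_integral in Hu; lra).
    assert (Hs1 : sin (psi t) * sin (psi t) = 1) by nra.
    rewrite Hs1, Hu in *. unfold Rdiv. rewrite !Rmult_0_r, Rmult_0_l, Rplus_0_l. nra.
  - pose proof (X_mul_pos _ (u_bound t) Hu).
    assert (0 < X (u t) * u t / rho) by (apply Rdiv_lt_0_compat; lra).
    assert (0 <= rho * (- K (u t)) * (sin (psi t) * sin (psi t))).
    { apply Rmult_le_pos; [nra | apply Rle_0_sqr]. }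
    lra.
Qed.

Lemma orbit_surrounds_origin : surrounds_origin x y (2 * PI).
Proof.
  pose proof orbit_is_solution as Hsol.
  split.
  - intros t E. injection E as Ex Ey. pose proof (radial_pos t). rewrite Ex, Ey in *. lra.
  - exists (fun t => psi t + atan ((y t * cos (psi t) - x t * sin (psi t)) /
                                 (x t * cos (psi t) + y t * sin (psi t)))).
    split; [| split].
    + intros t. apply continuity_pt_of_ex_derive. pose proof (radial_pos t).
      destruct (Hsol t) as [Hx Hy].
      auto_derive. repeat split; try (eapply ex_derive_of_lim; eauto). lra.
    + intros t. apply (polar_angle_lift (x t) (y t) (psi t) (radial_pos t)).
    + rewrite <- (Rplus_0_l (2 * PI)). unfold x, y, u.
      rewrite psi_shift, cos_2PI_shift, sin_2PI_shift.
      pose proof PI_RGT_0. lra.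
Qed.
End Orbit.

Lemma phase_exists rho p0 : 0 < rho <= r0 ->
  exists psi : R -> R, psi 0 = p0 /\
    (forall t, derivable_pt_lim psi t (/ (1 + h (rho * cos (psi t))))) /\
    (forall t, psi (t + 2 * PI) = psi t + 2 * PI) /\
    (forall a b, a < b -> psi a < psi b).
Proof.
  intros Hrho. set (speed p := 1 + h (rho * cos p)).
  assert (speed_ge : forall p, / 2 <= speed p).
  { intros p. apply h_ge. pose proof (Rabs_mult_cos_le rho p). lra. }
  assert (speed_cont : forall p, continuity_pt speed p).
  { intros p. apply continuity_pt_plus; [apply continuity_pt_const; intros ? ?; reflexivity |].
    apply (continuity_pt_comp (fun p => rho * cos p) h); [| apply h_cont].
    apply continuity_pt_of_ex_derive. auto_derive. easy. }
  pose proof (derivable_pt_lim_RInt speed speed_cont) as G_deriv.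
  set (G p := RInt speed 0 p) in G_deriv.
  assert (G_shift : forall p, G (p + 2 * PI) = G p + 2 * PI).
  { intros p. enough (E : G (p + 2 * PI) - (p + 2 * PI) = G p - p) by lra.
    apply (primitive_odd_cos_periodic h (fun q => G q - q) rho h_odd).
    - unfold G. rewrite RInt_point. apply Rminus_diag.
    - intros q. replace (h (rho * cos q)) with (speed q - 1) by (unfold speed; ring).
      apply derivable_pt_lim_minus; [apply G_deriv | apply derivable_pt_lim_id]. }
  destruct (deriv_ge_inverse G speed (/ 2) ltac:(lra) G_deriv speed_ge)
    as [Ginv [G_Ginv [Ginv_G [Ginv_incr Ginv_deriv]]]].
  exists (fun t => Ginv (t + G p0)). split; [| split; [| split]].
  - now rewrite Rplus_0_l, Ginv_G.
  - intros t. replace (/ (1 + h (rho * cos (Ginv (t + G p0)))))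
      with (/ speed (Ginv (t + G p0)) * 1) by (unfold speed; ring).
    apply (derivable_pt_lim_comp (fun t => t + G p0) Ginv); [| apply Ginv_deriv].
    replace 1 with (1 + 0) by ring.
    apply derivable_pt_lim_plus; [apply derivable_pt_lim_id | apply derivable_pt_lim_const].
  - intros t. rewrite <- (Ginv_G (Ginv (t + G p0) + 2 * PI)), G_shift, G_Ginv.
    f_equal. ring.
  - intros a b Hab. apply Ginv_incr. lra.
Qed.

Lemma closed_orbit_polar rho p0 : 0 < rho <= r0 ->
  closed_orbit_through P Q (X (rho * cos p0)) (- rho * sin p0 * K (rho * cos p0)) (2 * PI).
Proof.
  intros Hrho.
  destruct (phase_exists rho p0 Hrho) as [psi [psi_0 [psi_deriv [psi_shift psi_incr]]]].
  exists (fun t => X (rho * cos (psi t))), (fun t => - rho * sin (psi t) * K (rho * cos (psi t))).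
  split; [| split; [| split; [| split]]].
  - now apply orbit_is_solution.
  - now rewrite psi_0.
  - now rewrite psi_0.
  - now apply orbit_min_period.
  - now apply orbit_surrounds_origin.
Qed.

Lemma X_attains a r : 0 < r -> X (- r) < a < X r -> exists u, - r <= u <= r /\ X u = a.
Proof.
  intros Hr Ha.
  destruct (IVT_interv (fun u => X u - a) (- r) r) as [u [Hu HXu]]; [| lra | simpl; lra | simpl; lra |].
  - intros u _. apply continuity_pt_minus; [| apply continuity_pt_const; intros ? ?; reflexivity].
    apply continuity_pt_of_ex_derive. eapply ex_derive_of_lim, X_deriv.
  - exists u. split; [exact Hu |]. simpl in HXu. lra.
Qed.

Lemma small_disk_polar : exists delta, 0 < delta /\
  forall a b, 0 < a ^ 2 + b ^ 2 < delta ^ 2 ->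
  exists rho p0, 0 < rho <= r0 /\
    a = X (rho * cos p0) /\ b = - rho * sin p0 * K (rho * cos p0).
Proof.
  set (r := r0 / 2).
  assert (HXr : 0 < X r) by (rewrite <- X_0; apply X_increasing; unfold r; lra).
  assert (HXmr : X (- r) < 0) by (rewrite <- X_0; apply X_increasing; unfold r; lra).
  set (delta := Rmin (Rmin (X r) (- X (- r))) (kappa * r)).
  assert (Hd1 : delta <= X r) by (unfold delta; eapply Rle_trans; [apply Rmin_l | apply Rmin_l]).
  assert (Hd2 : delta <= - X (- r)) by (unfold delta; eapply Rle_trans; [apply Rmin_l | apply Rmin_r]).
  assert (Hd3 : delta <= kappa * r) by (unfold delta; apply Rmin_r).
  assert (Hd : 0 < delta) by (unfold delta, r in *; repeat apply Rmin_pos; nra).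
  exists delta. split; [exact Hd |]. intros a b Hab.
  assert (Ha : - delta < a < delta) by nra.
  assert (Hb : Rabs b < delta) by (apply Rabs_def1; nra).
  destruct (X_attains a r) as [u0 [Hu0 HXu0]]; [unfold r; lra | lra |].
  assert (Hu0r : Rabs u0 <= r0) by (apply Rabs_le; unfold r in *; lra).
  pose proof (K_le u0 Hu0r) as HK.
  set (v0 := b / K u0).
  assert (Hv0 : Rabs v0 <= r).
  { unfold v0, Rdiv. rewrite Rabs_mult, Rabs_inv, (Rabs_left (K u0)) by lra.
    apply Rmult_le_reg_r with (- K u0); [lra |].
    rewrite Rmult_assoc, Rinv_l, Rmult_1_r by lra. nra. }
  apply Rabs_le_between in Hv0.
  assert (Hpos : 0 < u0 ^ 2 + v0 ^ 2).
  { destruct (Req_dec u0 0) as [-> | Hu]; [| nra].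
    assert (b <> 0) by (intros ->; rewrite X_0 in HXu0; nra).
    assert (v0 <> 0) by (unfold v0, Rdiv; apply Rmult_integral_contrapositive_currified;
                           [| apply Rinv_neq_0_compat]; lra).
    nra. }
  destruct (polar_coordinates u0 v0 Hpos) as [p0 [Hu0p Hv0p]].
  exists (sqrt (u0 ^ 2 + v0 ^ 2)), p0. split; [| split].
  - split; [apply sqrt_lt_R0; lra |].
    rewrite <- (sqrt_Rsqr r0) by lra. apply sqrt_le_1_alt. unfold Rsqr, r in *. nra.
  - rewrite <- Hu0p. lra.
  - rewrite <- Hu0p, <- Hv0p. unfold v0. field. lra.
Qed.

Theorem conjugate_isochronous_center : is_isochronous_center P Q.
Proof.
  destruct small_disk_polar as [delta [Hdelta Hdisk]].
  exists delta, (2 * PI). split; [exact Hdelta |]. intros a b Hab.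
  destruct (Hdisk a b Hab) as [rho [p0 [Hrho [-> ->]]]].
  now apply closed_orbit_polar.
Qed.
End ConjugateCenter.

(** * The binomial series of (1 + z)^(-1/2) *)

Fixpoint inv_sqrt_coef (n : nat) : R :=
  match n with
  | O => 1
  | S k => - inv_sqrt_coef k * (2 * INR k + 1) / (2 * INR k + 2)
  end.

Lemma inv_sqrt_coef_bound n : Rabs (inv_sqrt_coef n) <= 1.
Proof.
  induction n as [|n IH]; simpl; [rewrite Rabs_R1; lra |].
  pose proof (pos_INR n).
  assert (Hq : 0 <= (2 * INR n + 1) / (2 * INR n + 2) <= 1).
  { split; [apply Rdiv_le_0_compat; lra |].
    apply Rmult_le_reg_r with (2 * INR n + 2); [lra |]. field_simplify; lra. }
  replace (- inv_sqrt_coef n * (2 * INR n + 1) / (2 * INR n + 2))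
    with (- inv_sqrt_coef n * ((2 * INR n + 1) / (2 * INR n + 2))) by (field; lra).
  rewrite Rabs_mult, Rabs_Ropp, (Rabs_right (_ / _)) by lra.
  pose proof (Rabs_pos (inv_sqrt_coef n)). nra.
Qed.

Definition inv_sqrt_partial (N : nat) (z : R) : R :=
  sum_f_R0 (fun n => inv_sqrt_coef n * z ^ n) N.

Definition inv_sqrt_partial_deriv (N : nat) (z : R) : R :=
  sum_f_R0 (fun n => INR n * inv_sqrt_coef n * z ^ Nat.pred n) N.

Lemma derivable_pt_lim_inv_sqrt_partial N z :
  derivable_pt_lim (inv_sqrt_partial N) z (inv_sqrt_partial_deriv N z).
Proof.
  induction N as [|N IH].
  - unfold inv_sqrt_partial, inv_sqrt_partial_deriv; simpl.
    apply is_derive_Reals. auto_derive; [easy | ring].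
  - change (inv_sqrt_partial (S N))
      with (fun z => inv_sqrt_partial N z + inv_sqrt_coef (S N) * z ^ S N).
    change (inv_sqrt_partial_deriv (S N) z)
      with (inv_sqrt_partial_deriv N z + INR (S N) * inv_sqrt_coef (S N) * z ^ N).
    apply (derivable_pt_lim_plus (inv_sqrt_partial N)); [exact IH |].
    apply is_derive_Reals. auto_derive; [easy |].
    change (match N with 0%nat => 1 | S _ => INR N + 1 end) with (INR (S N)). simpl inv_sqrt_coef. ring.
Qed.

(* The partial sums satisfy the ODE  2 (1 + z) w' + w = 0  of (1 + z)^(-1/2)
   up to a single remainder term. *)
Lemma inv_sqrt_partial_ode N z :
  2 * (1 + z) * inv_sqrt_partial_deriv N z + inv_sqrt_partial N z
  = (2 * INR N + 1) * inv_sqrt_coef N * z ^ N.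
Proof.
  induction N as [|N IH]; [unfold inv_sqrt_partial, inv_sqrt_partial_deriv; simpl; ring |].
  change (inv_sqrt_partial_deriv (S N) z)
    with (inv_sqrt_partial_deriv N z + INR (S N) * inv_sqrt_coef (S N) * z ^ N).
  change (inv_sqrt_partial (S N) z) with (inv_sqrt_partial N z + inv_sqrt_coef (S N) * z ^ S N).
  transitivity ((2 * (1 + z) * inv_sqrt_partial_deriv N z + inv_sqrt_partial N z)
    + (2 * (1 + z) * INR (S N) * inv_sqrt_coef (S N) * z ^ N + inv_sqrt_coef (S N) * z ^ S N));
    [ring |].
  rewrite IH. simpl inv_sqrt_coef. rewrite S_INR. pose proof (pos_INR N). simpl pow. field. lra.
Qed.

Lemma inv_sqrt_partial_0 N : inv_sqrt_partial N 0 = 1.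
Proof.
  induction N as [|N IH]; unfold inv_sqrt_partial in *; simpl; [ring |].
  rewrite IH. ring.
Qed.

Lemma quarter_pow_le N : (2 * INR N + 1) * (/ 4) ^ N <= 2 * (/ 2) ^ N.
Proof.
  induction N as [|N IH]; [simpl; lra |]. rewrite S_INR. simpl pow.
  assert (0 <= (/ 4) ^ N) by (apply pow_le; lra).
  assert ((/ 4) ^ N <= (/ 2) ^ N) by (apply pow_incr; lra).
  nra.
Qed.

Lemma sqrt_1_plus_ge z : - / 4 <= z -> / 2 <= sqrt (1 + z).
Proof.
  intros Hz. rewrite <- (sqrt_Rsqr (/ 2)) by lra.
  apply sqrt_le_1_alt. unfold Rsqr. lra.
Qed.

Definition inv_sqrt_remainder (N : nat) (t : R) : R :=
  (2 * INR N + 1) * inv_sqrt_coef N * t ^ N / (2 * sqrt (1 + t)).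

(* Multiplying by sqrt (1 + t) turns the ODE remainder into an exact derivative. *)
Lemma derivable_pt_lim_inv_sqrt_partial_mul N c : - / 4 <= c ->
  derivable_pt_lim (fun t => inv_sqrt_partial N t * sqrt (1 + t)) c (inv_sqrt_remainder N c).
Proof.
  intros Hc. pose proof (sqrt_1_plus_ge c Hc) as Hs.
  pose proof (sqrt_sqrt (1 + c) ltac:(lra)) as Hs2.
  replace (inv_sqrt_remainder N c) with (inv_sqrt_partial_deriv N c * sqrt (1 + c)
                                         + inv_sqrt_partial N c * (/ (2 * sqrt (1 + c)))).
  2: { unfold inv_sqrt_remainder. rewrite <- inv_sqrt_partial_ode.
       set (s := sqrt (1 + c)) in *. rewrite <- Hs2. field. lra. }
  apply (derivable_pt_lim_mult (inv_sqrt_partial N) (fun t => sqrt (1 + t)));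
    [apply derivable_pt_lim_inv_sqrt_partial |].
  apply is_derive_Reals. auto_derive; [lra | field; lra].
Qed.

Lemma inv_sqrt_remainder_bound N c : Rabs c <= / 4 ->
  Rabs (inv_sqrt_remainder N c) <= 2 * (/ 2) ^ N.
Proof.
  intros Hc. pose proof (Rabs_le_between c (/ 4)) as [Hc' _].
  pose proof (sqrt_1_plus_ge c ltac:(lra)) as Hs.
  pose proof (pos_INR N). pose proof (inv_sqrt_coef_bound N). pose proof (Rabs_pos (inv_sqrt_coef N)).
  assert (Hc4 : Rabs c ^ N <= (/ 4) ^ N) by (apply pow_incr; split; [apply Rabs_pos | exact Hc]).
  pose proof (pow_le (Rabs c) N (Rabs_pos c)).
  unfold inv_sqrt_remainder.
  rewrite Rabs_div, (Rabs_right (2 * sqrt (1 + c))), !Rabs_mult, <- RPow_abs,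
    (Rabs_right (2 * INR N + 1)) by lra.
  apply Rle_trans with ((2 * INR N + 1) * (/ 4) ^ N); [| apply quarter_pow_le].
  apply Rle_trans with ((2 * INR N + 1) * (Rabs (inv_sqrt_coef N) * Rabs c ^ N)).
  - assert (0 <= (2 * INR N + 1) * (Rabs (inv_sqrt_coef N) * Rabs c ^ N)) by
      (apply Rmult_le_pos; [| apply Rmult_le_pos]; lra).
    apply Rmult_le_reg_r with (2 * sqrt (1 + c)); [lra |].
    field_simplify; [nra | lra].
  - apply Rmult_le_compat_l; [lra |]. nra.
Qed.

Lemma inv_sqrt_partial_error N z : Rabs z <= / 4 ->
  Rabs (inv_sqrt_partial N z - / sqrt (1 + z)) <= 4 * (/ 2) ^ N.
Proof.
  intros Hz. pose proof (Rabs_le_between z (/ 4)) as [Hz' _]. specialize (Hz' Hz).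
  set (W t := inv_sqrt_partial N t * sqrt (1 + t)).
  assert (Hrange : forall c, Rmin 0 z <= c <= Rmax 0 z -> Rabs c <= / 4).
  { intros c Hc. apply Rabs_le. unfold Rmin, Rmax in Hc. destruct (Rle_dec 0 z); lra. }
  destruct (MVT_abs W (inv_sqrt_remainder N) 0 z) as [c [Hc Hcr]].
  { intros c Hc. apply derivable_pt_lim_inv_sqrt_partial_mul.
    pose proof (Hrange c Hc) as Hc'. apply Rabs_le_between in Hc'. lra. }
  assert (HW0 : W 0 = 1) by (unfold W; rewrite inv_sqrt_partial_0, Rplus_0_r, sqrt_1; ring).
  rewrite HW0, Rminus_0_r in Hc.
  pose proof (inv_sqrt_remainder_bound N c (Hrange c Hcr)).
  pose proof (sqrt_1_plus_ge z ltac:(lra)) as Hsz.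
  assert (HW : Rabs (W z - 1) <= 2 * (/ 2) ^ N).
  { rewrite Hc. pose proof (Rabs_pos (inv_sqrt_remainder N c)). pose proof (Rabs_pos z). nra. }
  replace (inv_sqrt_partial N z - / sqrt (1 + z)) with ((W z - 1) / sqrt (1 + z))
    by (unfold W; field; lra).
  rewrite Rabs_div, (Rabs_right (sqrt (1 + z))) by lra.
  apply Rmult_le_reg_r with (sqrt (1 + z)); [lra |].
  field_simplify; [| lra]. pose proof (pow_le (/ 2) N ltac:(lra)). nra.
Qed.

Lemma inv_sqrt_series z : Rabs z <= / 4 -> Pser inv_sqrt_coef z (/ sqrt (1 + z)).
Proof.
  intros Hz eps Heps.
  destruct (pow_lt_1_zero (/ 2) ltac:(rewrite Rabs_right; lra) (eps / 4) ltac:(lra)) as [N HN].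
  exists N. intros n Hn. specialize (HN n Hn).
  rewrite Rabs_right in HN by (apply Rle_ge, pow_le; lra).
  pose proof (inv_sqrt_partial_error n z Hz). unfold R_dist, inv_sqrt_partial in *. lra.
Qed.

Lemma pser_dilate (b : nat -> R) al z l :
  Pser b (al * z) l -> Pser (fun n => b n * al ^ n) z l.
Proof.
  unfold Pser. intros H.
  replace (fun n => b n * al ^ n * z ^ n) with (fun n => b n * (al * z) ^ n); [exact H |].
  apply functional_extensionality. intros n. rewrite Rpow_mult_distr. ring.
Qed.

(* Coefficients of the series in u obtained by substituting z = u ^ m. *)
Definition spread_coef (b : nat -> R) (m n : nat) : R :=
  if Nat.eqb (n mod m) 0 then b (n / m)%nat else 0.

Lemma succ_div_mod m N : (m <> 0)%nat ->
  ((S N) mod m = 0 /\ S N / m = S (N / m))%nat \/ ((S N) mod m <> 0 /\ S N / m = N / m)%nat.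
Proof.
  intros Hm. pose proof (Nat.div_mod N m Hm) as E. pose proof (Nat.mod_upper_bound N m Hm).
  destruct (Nat.eq_dec (S (N mod m)) m) as [h|h].
  - left. split.
    + symmetry. apply (Nat.mod_unique (S N) m (S (N / m)) 0); lia.
    + symmetry. apply (Nat.div_unique (S N) m (S (N / m)) 0); lia.
  - right. split.
    + rewrite <- (Nat.mod_unique (S N) m (N / m) (S (N mod m))); lia.
    + symmetry. apply (Nat.div_unique (S N) m (N / m) (S (N mod m))); lia.
Qed.

Lemma sum_spread_coef b m u N : (m <> 0)%nat ->
  sum_f_R0 (fun n => spread_coef b m n * u ^ n) N = sum_f_R0 (fun j => b j * (u ^ m) ^ j) (N / m).
Proof.
  intros Hm. induction N as [|N IH].
  - unfold spread_coef. simpl. rewrite Nat.Div0.mod_0_l, Nat.Div0.div_0_l. simpl. ring.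
  - rewrite tech5, IH. unfold spread_coef.
    destruct (succ_div_mod m N Hm) as [[Hmod Hdiv] | [Hmod Hdiv]].
    + rewrite Hmod, Hdiv, tech5. simpl Nat.eqb. f_equal. f_equal.
      rewrite <- pow_mult. f_equal.
      pose proof (Nat.div_mod (S N) m Hm). rewrite Hmod, Hdiv in H. lia.
    + rewrite Hdiv. destruct (Nat.eqb_spec (S N mod m) 0); [contradiction |]. ring.
Qed.

Lemma pser_spread_coef b m u l : (m <> 0)%nat ->
  Pser b (u ^ m) l -> Pser (spread_coef b m) u l.
Proof.
  intros Hm H eps Heps. destruct (H eps Heps) as [N HN].
  exists (N * m)%nat. intros n Hn. unfold R_dist. rewrite sum_spread_coef by exact Hm.
  apply HN. rewrite <- (Nat.div_mul N m Hm). apply Nat.Div0.div_le_mono. lia.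
Qed.

Lemma monomial_inv_sqrt_analytic (h : R -> R) (al ga : R) (k m : nat) : (0 < m)%nat ->
  (forall u, h u = al * u ^ k / sqrt (1 + ga * u ^ m)) -> analytic_near0 h.
Proof.
  intros Hm Hh.
  set (r := / (4 * (Rabs ga + 1))).
  assert (Hr : 0 < r <= / 4).
  { pose proof (Rabs_pos ga). unfold r. split; [apply Rinv_0_lt_compat; lra |].
    apply Rinv_le_contravar; lra. }
  eexists. exists r. split; [lra |]. intros u Hu.
  assert (Hz : Rabs (ga * u ^ m) <= / 4).
  { rewrite Rabs_mult, <- RPow_abs.
    assert (Rabs u ^ m <= Rabs u).
    { destruct m as [|m]; [lia |]. change (Rabs u ^ S m) with (Rabs u * Rabs u ^ m).
      apply Rle_trans with (Rabs u * 1); [apply Rmult_le_compat_l; [apply Rabs_pos |] | lra].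
      rewrite <- (pow1 m). apply pow_incr. split; [apply Rabs_pos | lra]. }
    pose proof (Rabs_pos ga). pose proof (Rabs_pos u).
    apply Rle_trans with (Rabs ga * r); [nra |].
    unfold r. apply Rmult_le_reg_r with (4 * (Rabs ga + 1)); [lra |].
    field_simplify; lra. }
  pose proof (inv_sqrt_series _ Hz) as H.
  apply pser_dilate, (pser_spread_coef _ m) in H; [| lia].
  apply is_pseries_Reals in H. apply is_pseries_Reals.
  apply (is_pseries_incr_n _ k), (is_pseries_scal al) in H; [| apply Rmult_comm].
  rewrite pow_n_pow in H. rewrite Hh.
  replace (al * u ^ k / sqrt (1 + ga * u ^ m)) with (scal al (scal (u ^ k) (/ sqrt (1 + ga * u ^ m))));
    [exact H | symmetry; apply Rmult_assoc].
Qed.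

(** * System (ii) *)

Lemma exp_nat_mult n a : exp (INR n * a) = exp a ^ n.
Proof.
  induction n as [|n IH]; [simpl; rewrite Rmult_0_l; apply exp_0 |].
  rewrite S_INR, Rmult_plus_distr_r, Rmult_1_l, exp_plus, IH. simpl. ring.
Qed.

Lemma exp_ln_div_pow n w : (n <> 0)%nat -> 0 < w -> exp (ln w / INR n) ^ n = w.
Proof.
  intros Hn Hw. rewrite <- exp_nat_mult.
  replace (INR n * (ln w / INR n)) with (ln w) by (field; apply not_0_INR, Hn).
  apply exp_ln, Hw.
Qed.

Lemma pow6_nonneg u : 0 <= u ^ 6.
Proof. replace (u ^ 6) with ((u ^ 3) ^ 2) by ring. apply pow2_ge_0. Qed.

Lemma cube_le_1 u : Rabs u <= 1 -> -1 <= u ^ 3 <= 1.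
Proof.
  intros H. apply Rabs_le_between in H.
  assert (0 <= (u + 1) * (u ^ 2 - u + 1)) by (apply Rmult_le_pos; nra).
  assert (0 <= (1 - u) * (u ^ 2 + u + 1)) by (apply Rmult_le_pos; nra).
  split; nra.
Qed.

Section System2.

Let sqrt6 (u : R) := sqrt (u ^ 6 + 4).

Let sqrt6_sq u : sqrt6 u * sqrt6 u = u ^ 6 + 4.
Proof. apply sqrt_sqrt. pose proof (pow6_nonneg u). lra. Qed.

Let sqrt6_ge u : 2 <= sqrt6 u.
Proof.
  pose proof (sqrt_pos (u ^ 6 + 4)). pose proof (sqrt6_sq u). pose proof (pow6_nonneg u).
  unfold sqrt6 in *. nra.
Qed.

Let sqrt6_gt_cube u : u ^ 3 < sqrt6 u.
Proof.
  pose proof (sqrt6_sq u). pose proof (sqrt6_ge u).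
  destruct (Rle_dec (u ^ 3) 0); [lra | nra].
Qed.

(* c u > 0 is the root of  c^3 (c^3 + u^3) = 1,  i.e. c^3 = (sqrt (u^6 + 4) - u^3) / 2. *)
Definition sys2_c (u : R) : R := exp (ln ((sqrt6 u - u ^ 3) / 2) / 3).
Definition sys2_X (u : R) : R := u * sys2_c u.
Definition sys2_K (u : R) : R := - sys2_c u.

Lemma sys2_c_pos u : 0 < sys2_c u.
Proof. apply exp_pos. Qed.

Lemma sys2_c_cube u : 2 * sys2_c u ^ 3 = sqrt6 u - u ^ 3.
Proof.
  unfold sys2_c. replace 3 with (INR 3) at 1 by (simpl; ring).
  pose proof (sqrt6_gt_cube u).
  rewrite exp_ln_div_pow; [field | discriminate | lra].
Qed.

Lemma h2_sqrt6 u : h2 u = u ^ 3 / sqrt6 u.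
Proof. unfold h2, sqrt6. f_equal. f_equal. ring. Qed.

Lemma sys2_c_deriv u : derivable_pt_lim sys2_c u (- sys2_c u * u ^ 2 / sqrt6 u).
Proof.
  pose proof (sqrt6_ge u). pose proof (sqrt6_gt_cube u). pose proof (pow6_nonneg u).
  apply is_derive_Reals. unfold sys2_c, sqrt6 in *.
  unfold Rminus, Rdiv. auto_derive; cbn [pow] in *; [repeat split; lra |]. field. lra.
Qed.

Ltac sys2_algebra u :=
  pose proof (sys2_c_cube u) as Hc; pose proof (sqrt6_sq u) as HS; pose proof (sqrt6_ge u);
  rewrite ?h2_sqrt6; unfold sys2_X, sys2_K, p1_2, q2_2, q0_2;
  set (c := sys2_c u) in *; set (S := sqrt6 u) in *; clearbody c S;
  field_simplify_eq; [clear - Hc HS; cbn [pow] in *; nsatz | lra ..].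

Lemma sys2_X_deriv u : derivable_pt_lim sys2_X u ((1 + h2 u) * p1_2 (sys2_X u) * sys2_K u).
Proof.
  apply is_derive_Reals. unfold sys2_X at 1.
  auto_derive; [eapply ex_derive_of_lim, sys2_c_deriv |].
  rewrite (Derive_of_lim _ _ _ (sys2_c_deriv u)). sys2_algebra u.
Qed.

Lemma sys2_K_deriv u : derivable_pt_lim sys2_K u ((1 + h2 u) * q2_2 (sys2_X u) * sys2_K u ^ 2).
Proof.
  apply is_derive_Reals. unfold sys2_K at 1.
  auto_derive; [eapply ex_derive_of_lim, sys2_c_deriv |].
  rewrite (Derive_of_lim _ _ _ (sys2_c_deriv u)). sys2_algebra u.
Qed.

Lemma sys2_q0_eq u : - u * sys2_K u = (1 + h2 u) * q0_2 (sys2_X u).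
Proof. sys2_algebra u. Qed.

Lemma sys2_p1_X u : p1_2 (sys2_X u) = - sys2_c u ^ 6.
Proof. sys2_algebra u. Qed.

Lemma sys2_X_0 : sys2_X 0 = 0.
Proof. unfold sys2_X. ring. Qed.

Lemma sys2_K_le u : Rabs u <= 1 -> sys2_K u <= - / 2.
Proof.
  intros Hu. unfold sys2_K. pose proof (cube_le_1 u Hu). pose proof (sqrt6_ge u).
  pose proof (sys2_c_cube u). pose proof (sys2_c_pos u).
  destruct (Rle_dec (/ 2) (sys2_c u)); [lra | exfalso].
  assert (sys2_c u ^ 3 < / 8) by (simpl; assert (sys2_c u * sys2_c u < / 4) by nra; nra).
  lra.
Qed.

Lemma h2_odd u : h2 (- u) = - h2 u.
Proof. unfold h2. replace ((- u) ^ 6) with (u ^ 6) by ring. unfold Rdiv. ring. Qed.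

Lemma h2_ge u : Rabs u <= 1 -> / 2 <= 1 + h2 u.
Proof.
  intros Hu. rewrite h2_sqrt6. pose proof (cube_le_1 u Hu). pose proof (sqrt6_ge u).
  apply Rmult_le_reg_r with (sqrt6 u); [lra |]. field_simplify; lra.
Qed.

Lemma h2_continuous u : continuity_pt h2 u.
Proof.
  apply continuity_pt_of_ex_derive. pose proof (pow6_nonneg u). unfold h2.
  auto_derive. cbn [pow] in *. split; [lra |].
  split; [apply Rgt_not_eq, sqrt_lt_R0; lra | easy].
Qed.

Theorem system2_isochronous_center : is_isochronous_center P2 Q2.
Proof.
  apply (conjugate_isochronous_center P2 Q2 p1_2 q0_2 q2_2 h2 sys2_X sys2_K 1 (/ 2));
    try lra.
  - intros x y. unfold P2, p1_2. ring.
  - intros x y. unfold Q2, q0_2, q2_2. ring.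
  - exact h2_odd.
  - exact h2_continuous.
  - exact h2_ge.
  - exact sys2_X_0.
  - exact sys2_X_deriv.
  - exact sys2_K_deriv.
  - exact sys2_q0_eq.
  - intros u _. rewrite sys2_p1_X. pose proof (pow_lt _ 6 (sys2_c_pos u)). lra.
  - exact sys2_K_le.
Qed.
End System2.

Section System2Urabe.
Variable x : R.
Hypothesis x_small : - / 2 < x < / 2.

Let w_pos : 0 < 1 - x ^ 3.
Proof.
  assert (Rabs x <= 1) by (apply Rabs_le; lra). pose proof (cube_le_1 x H).
  assert (x ^ 3 < 1) by (destruct (Rle_dec x 0); simpl; nra). lra.
Qed.

(* v = (1 - x^3)^(-1/6); every power of 1 - x^3 below is a power of v. *)
Let v := exp (- (1 / 6) * ln (1 - x ^ 3)).

Let v_pos : 0 < v.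
Proof. apply exp_pos. Qed.

Let exp_v (n : nat) (a : R) : a = - (INR n / 6) -> exp (a * ln (1 - x ^ 3)) = v ^ n.
Proof. intros ->. unfold v. rewrite <- exp_nat_mult. f_equal. field. Qed.

Let v6 : v ^ 6 * (1 - x ^ 3) = 1.
Proof.
  unfold v. rewrite <- exp_nat_mult.
  replace (INR 6 * (- (1 / 6) * ln (1 - x ^ 3))) with (- ln (1 - x ^ 3)) by (simpl; field).
  rewrite exp_Ropp, exp_ln by exact w_pos. field. lra.
Qed.

Lemma system2_F_deriv :
  derivable_pt_lim (fun x => - (7 / 6) * ln (1 - x ^ 3)) x (urabe_f p1_2 dp1_2 q2_2 x).
Proof.
  apply is_derive_Reals. auto_derive; [pose proof w_pos; cbn [pow] in *; repeat split; lra |].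
  unfold urabe_f, p1_2, dp1_2, q2_2. field. lra.
Qed.

Lemma system2_Phi_deriv :
  derivable_pt_lim (fun x => / 2 * x ^ 2 * exp (- (1 / 3) * ln (1 - x ^ 3))) x
    (urabe_g p1_2 q0_2 x * exp (2 * (- (7 / 6) * ln (1 - x ^ 3)))).
Proof.
  apply is_derive_Reals. auto_derive; [pose proof w_pos; cbn [pow] in *; repeat split; lra |].
  replace (2 * (- (7 / 6) * ln (1 - x ^ 3))) with (- (INR 14 / 6) * ln (1 - x ^ 3)) by (simpl; field).
  rewrite (exp_v 14 (- (INR 14 / 6))) by reflexivity.
  replace (1 + - (x * (x * (x * 1)))) with (1 - x ^ 3) by ring.
  rewrite (exp_v 2 (- (1 / 3))) by (simpl; field).
  unfold urabe_g, p1_2, q0_2. pose proof v6. clearbody v.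
  field_simplify_eq; [cbn [pow] in *; nsatz | lra].
Qed.

Lemma system2_xi_sq : / 2 * (x * v) ^ 2 = / 2 * x ^ 2 * exp (- (1 / 3) * ln (1 - x ^ 3)).
Proof. rewrite (exp_v 2 (- (1 / 3))) by (simpl; field). ring. Qed.

Lemma system2_xi_pos : x <> 0 -> 0 < x * (x * v).
Proof. intros. assert (0 < x * x) by nra. nra. Qed.

Lemma system2_xi_rel :
  x * v / (1 + h2 (x * v)) = urabe_g p1_2 q0_2 x * exp (- (7 / 6) * ln (1 - x ^ 3)).
Proof.
  rewrite (exp_v 7 (- (7 / 6))) by (simpl; field). unfold h2.
  assert (Hv3 : 0 < v ^ 3) by (apply pow_lt, v_pos).
  assert (Hs : sqrt (4 + (x * v) ^ 6) = (2 - x ^ 3) * v ^ 3).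
  { rewrite <- sqrt_square by (apply Rmult_le_pos; lra). f_equal.
    pose proof v6. clearbody v. cbn [pow] in *. nsatz. }
  rewrite Hs. unfold urabe_g, p1_2, q0_2.
  replace (1 + (x * v) ^ 3 / ((2 - x ^ 3) * v ^ 3)) with (2 / (2 - x ^ 3)) by (field; split; lra).
  pose proof v6. clearbody v.
  field_simplify_eq; [cbn [pow] in *; nsatz | lra].
Qed.
End System2Urabe.

Theorem system2_urabe :
  is_urabe_function (urabe_f p1_2 dp1_2 q2_2) (urabe_g p1_2 q0_2) h2.
Proof.
  split; [exact h2_odd | split].
  { apply (monomial_inv_sqrt_analytic h2 (/ 2) (/ 4) 3 6); [lia |].
    intros u. unfold h2. replace (4 + u ^ 6) with (4 * (1 + / 4 * u ^ 6)) by field.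
    pose proof (pow6_nonneg u).
    assert (E4 : sqrt 4 = 2) by (replace 4 with (2 ^ 2) by ring; apply sqrt_pow2; lra).
    rewrite sqrt_mult, E4 by lra.
    assert (0 < sqrt (1 + / 4 * u ^ 6)) by (apply sqrt_lt_R0; lra). field. lra. }
  exists (/ 2). split; [lra |].
  exists (fun x => - (7 / 6) * ln (1 - x ^ 3)),
         (fun x => / 2 * x ^ 2 * exp (- (1 / 3) * ln (1 - x ^ 3))),
         (fun x => x * exp (- (1 / 6) * ln (1 - x ^ 3))).
  split; [| split].
  - rewrite pow_i, Rminus_0_r, ln_1 by lia. ring.
  - rewrite pow_i by lia. ring.
  - intros x Hx. split; [| split; [| split; [| split]]].
    + apply system2_F_deriv; lra.
    + apply system2_Phi_deriv; lra.
    + apply system2_xi_sq; lra.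
    + apply system2_xi_pos; lra.
    + apply system2_xi_rel; lra.
Qed.

(** * System (i) *)

Section System1.
Variable s : R.
Hypothesis s_sign : s = 1 \/ s = -1.

Let s_sq : s * s = 1.
Proof. destruct s_sign as [-> | ->]; ring. Qed.

Let sqrt2_sq : sqrt 2 * sqrt 2 = 2.
Proof. apply sqrt_sqrt. lra. Qed.

Let sqrt2_gt : 1.4 < sqrt 2.
Proof. pose proof (sqrt_pos 2). nra. Qed.

Definition sys1_T (u : R) : R := sqrt (2 + 9 * u ^ 2).
Definition sys1_V (u : R) : R :=
  sqrt ((1 + 6 * u ^ 2 + 2 * s * u * sys1_T u) / (1 + 4 * u ^ 2)).
Definition sys1_X (u : R) : R := s * (sys1_V u - 1) / sqrt 2.
Definition sys1_K (u : R) : R := - (sys1_T u + s * u) / (sqrt 2 * (1 + 4 * u ^ 2)).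

Lemma sys1_T_sq u : sys1_T u * sys1_T u = 2 + 9 * u ^ 2.
Proof. apply sqrt_sqrt. pose proof (pow2_ge_0 u). lra. Qed.

Lemma sys1_T_pos u : 0 < sys1_T u.
Proof. apply sqrt_lt_R0. pose proof (pow2_ge_0 u). lra. Qed.

Lemma sys1_T_gt u : 3 * Rabs u < sys1_T u.
Proof.
  pose proof (sys1_T_sq u). pose proof (sys1_T_pos u). pose proof (Rabs_pos u).
  assert (Rabs u * Rabs u = u ^ 2) by (rewrite <- Rabs_mult, Rabs_right by nra; ring).
  nra.
Qed.

Lemma sys1_T_deriv u : derivable_pt_lim sys1_T u (9 * u / sys1_T u).
Proof.
  pose proof (sys1_T_pos u). pose proof (pow2_ge_0 u).
  apply is_derive_Reals. unfold sys1_T in *. unfold Rdiv.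
  auto_derive; cbn [pow] in *; [lra |]. field. lra.
Qed.

Let cross_bound u a : 0 < a -> u ^ 2 * (2 + 9 * u ^ 2) < a * a -> Rabs (s * u * sys1_T u) < a.
Proof.
  intros Ha Hlt. rewrite <- (Rabs_right a) by lra. apply Rsqr_lt_abs_0. unfold Rsqr.
  replace (s * u * sys1_T u * (s * u * sys1_T u)) with ((s * s) * u ^ 2 * (sys1_T u * sys1_T u)) by ring.
  rewrite s_sq, sys1_T_sq. lra.
Qed.

Lemma sys1_N_pos u : 0 < 1 + 6 * u ^ 2 + 2 * s * u * sys1_T u.
Proof.
  pose proof (pow2_ge_0 u).
  assert (Hc : Rabs (s * u * sys1_T u) < (1 + 6 * u ^ 2) / 2) by (apply cross_bound; nra).
  apply Rabs_def2 in Hc. lra.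
Qed.

Lemma sys1_V_sq u : sys1_V u * sys1_V u * (1 + 4 * u ^ 2) = 1 + 6 * u ^ 2 + 2 * s * u * sys1_T u.
Proof.
  pose proof (pow2_ge_0 u). pose proof (sys1_N_pos u). unfold sys1_V.
  rewrite sqrt_sqrt by (apply Rlt_le, Rdiv_lt_0_compat; lra). field. lra.
Qed.

Lemma sys1_V_pos u : 0 < sys1_V u.
Proof.
  pose proof (pow2_ge_0 u). pose proof (sys1_N_pos u).
  apply sqrt_lt_R0, Rdiv_lt_0_compat; lra.
Qed.

Lemma sys1_V_sq_lt u : sys1_V u * sys1_V u < 3.
Proof.
  pose proof (pow2_ge_0 u). pose proof (sys1_V_sq u).
  assert (H1 : Rabs (s * u * sys1_T u) < 1 + 3 * u ^ 2) by (apply cross_bound; nra).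
  apply Rabs_def2 in H1. nra.
Qed.

Lemma sys1_V_deriv u : derivable_pt_lim sys1_V u
  ((12 * u + 2 * s * sys1_T u + 18 * s * u ^ 2 / sys1_T u - 8 * u * sys1_V u * sys1_V u)
   / (2 * sys1_V u * (1 + 4 * u ^ 2))).
Proof.
  pose proof (pow2_ge_0 u). pose proof (sys1_N_pos u). pose proof (sys1_T_pos u).
  pose proof (sys1_V_pos u) as HV. pose proof (sys1_V_sq u) as HV2.
  apply is_derive_Reals. unfold sys1_V in *. unfold Rdiv, Rminus in *.
  auto_derive; cbn [pow] in *.
  { repeat split; [eapply ex_derive_of_lim, sys1_T_deriv | lra | apply Rmult_lt_0_compat;
      [lra | apply Rinv_0_lt_compat; lra]]. }
  rewrite (Derive_of_lim _ _ _ (sys1_T_deriv u)).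
  match goal with |- context [sqrt ?a] => set (V := sqrt a) in * end.
  pose proof (sys1_T_sq u) as HT. set (T := sys1_T u) in *. clearbody V T.
  field_simplify_eq; [| repeat split; lra]. clear - HV2 HT. cbn [pow] in *. nsatz.
Qed.

Lemma h1_sys1_T u : h1 s u = - s * u / sys1_T u.
Proof. reflexivity. Qed.

(* nsatz only decides ideal membership, so the nonzero factors V, T, sqrt 2 and
   1 + 4 u^2 get explicit inverse variables that it may cancel against. *)
Ltac sys1_algebra u :=
  pose proof (sys1_V_sq u) as HV2; pose proof (sys1_T_sq u) as HT;
  pose proof (sys1_V_pos u); pose proof (sys1_T_pos u); pose proof (pow2_ge_0 u);
  rewrite ?h1_sys1_T; unfold sys1_X, sys1_K, p1_1, q2_1, q0_1;
  set (V := sys1_V u) in *; set (T := sys1_T u) in *; set (r := sqrt 2) in *;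
  clearbody V T r;
  assert (HVi : V * / V = 1) by (field; lra); assert (HTi : T * / T = 1) by (field; lra);
  assert (Hri : r * / r = 1) by (field; lra);
  assert (HDi : (1 + 4 * u ^ 2) * / (1 + 4 * u ^ 2) = 1) by (field; lra);
  set (Vi := / V) in *; set (Ti := / T) in *; set (ri := / r) in *;
  set (Di := / (1 + 4 * u ^ 2)) in *; clearbody Vi Ti ri Di;
  field_simplify_eq;
  [clear - HV2 HT HVi HTi Hri HDi s_sq sqrt2_sq; cbn [pow] in *; nsatz | repeat split; lra ..].

Lemma sys1_X_deriv u : derivable_pt_lim sys1_X u ((1 + h1 s u) * p1_1 s (sys1_X u) * sys1_K u).
Proof.
  apply is_derive_Reals. unfold sys1_X at 1.
  auto_derive; [eapply ex_derive_of_lim, sys1_V_deriv |].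
  rewrite (Derive_of_lim _ _ _ (sys1_V_deriv u)). sys1_algebra u.
Qed.

Lemma sys1_K_deriv u : derivable_pt_lim sys1_K u ((1 + h1 s u) * q2_1 s (sys1_X u) * sys1_K u ^ 2).
Proof.
  pose proof (pow2_ge_0 u).
  apply is_derive_Reals. unfold sys1_K at 1.
  auto_derive.
  { repeat split; [eapply ex_derive_of_lim, sys1_T_deriv | apply Rmult_integral_contrapositive; lra]. }
  rewrite (Derive_of_lim _ _ _ (sys1_T_deriv u)). sys1_algebra u.
Qed.

Lemma sys1_q0_eq u : - u * sys1_K u = (1 + h1 s u) * q0_1 s (sys1_X u).
Proof. sys1_algebra u. Qed.

Lemma sys1_p1_X u : p1_1 s (sys1_X u) = - sys1_V u * (3 - sys1_V u * sys1_V u) / 2.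
Proof. sys1_algebra u. Qed.

Lemma sys1_X_0 : sys1_X 0 = 0.
Proof.
  unfold sys1_X, sys1_V.
  replace ((1 + 6 * 0 ^ 2 + 2 * s * 0 * sys1_T 0) / (1 + 4 * 0 ^ 2)) with 1 by field.
  rewrite sqrt_1. unfold Rdiv. ring.
Qed.

Lemma sys1_p1_X_neg u : p1_1 s (sys1_X u) < 0.
Proof.
  rewrite sys1_p1_X. pose proof (sys1_V_pos u). pose proof (sys1_V_sq_lt u).
  assert (0 < sys1_V u * (3 - sys1_V u * sys1_V u)) by (apply Rmult_lt_0_compat; lra).
  lra.
Qed.

Lemma sys1_K_le u : Rabs u <= / 10 -> sys1_K u <= - / 2.
Proof.
  intros Hu. apply Rabs_le_between in Hu. unfold sys1_K.
  pose proof (sys1_T_sq u). pose proof (sys1_T_pos u). pose proof (pow2_ge_0 u).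
  assert (HT : sqrt 2 <= sys1_T u) by nra.
  assert (Hsu : - / 10 <= s * u) by (destruct s_sign as [-> | ->]; lra).
  assert (HD : 1 + 4 * u ^ 2 <= 1.04) by (simpl; nra).
  apply Rmult_le_reg_r with (sqrt 2 * (1 + 4 * u ^ 2)); [nra |].
  unfold Rdiv. rewrite Rmult_assoc, Rinv_l, Rmult_1_r by nra. nra.
Qed.

Lemma h1_odd u : h1 s (- u) = - h1 s u.
Proof. unfold h1. replace ((- u) ^ 2) with (u ^ 2) by ring. unfold Rdiv. ring. Qed.

Lemma h1_ge u : / 2 <= 1 + h1 s u.
Proof.
  rewrite h1_sys1_T. pose proof (sys1_T_gt u). pose proof (sys1_T_pos u).
  assert (Rabs (s * u) = Rabs u).
  { rewrite Rabs_mult. destruct s_sign as [-> | ->];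
      [rewrite Rabs_R1 | rewrite (Rabs_left (-1)) by lra]; ring. }
  pose proof (Rle_abs (s * u)).
  apply Rmult_le_reg_r with (sys1_T u); [lra |]. field_simplify; lra.
Qed.

Lemma h1_continuous u : continuity_pt (h1 s) u.
Proof.
  apply continuity_pt_of_ex_derive. pose proof (pow2_ge_0 u). unfold h1.
  auto_derive. cbn [pow] in *. split; [lra |].
  split; [apply Rgt_not_eq, sqrt_lt_R0; lra | easy].
Qed.

Theorem system1_isochronous_center : is_isochronous_center (P1 s) (Q1 s).
Proof.
  apply (conjugate_isochronous_center (P1 s) (Q1 s) (p1_1 s) (q0_1 s) (q2_1 s) (h1 s)
           sys1_X sys1_K (/ 10) (/ 2)); try lra.
  - intros x y. unfold P1, p1_1. ring.
  - intros x y. unfold Q1, q0_1, q2_1. ring.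
  - exact h1_odd.
  - exact h1_continuous.
  - intros u _. apply h1_ge.
  - exact sys1_X_0.
  - exact sys1_X_deriv.
  - exact sys1_K_deriv.
  - exact sys1_q0_eq.
  - intros u _. apply sys1_p1_X_neg.
  - exact sys1_K_le.
Qed.

Definition sys1_xi (x : R) : R :=
  x * (1 + s * x / sqrt 2) / ((1 + s * sqrt 2 * x) * sqrt (1 - s * sqrt 2 * x - x ^ 2)).

Section System1Urabe.
Variable x : R.
Hypothesis x_small : - / 10 < x < / 10.

Let L_pos : 0 < 1 + s * sqrt 2 * x.
Proof. replace (s * sqrt 2 * x) with (sqrt 2 * (s * x)) by ring. nra. Qed.

Let M_pos : 0 < 1 - s * sqrt 2 * x - x ^ 2.
Proof. replace (s * sqrt 2 * x) with (sqrt 2 * (s * x)) by ring. simpl. nra. Qed.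

Let sqrtM_pos : 0 < sqrt (1 - s * sqrt 2 * x - x ^ 2).
Proof. apply sqrt_lt_R0, M_pos. Qed.

Let sqrtM_sq : sqrt (1 - s * sqrt 2 * x - x ^ 2) * sqrt (1 - s * sqrt 2 * x - x ^ 2)
  = 1 - s * sqrt 2 * x - x ^ 2.
Proof. apply sqrt_sqrt. lra. Qed.

Let xi_num_pos : 0 < 1 + s * x / sqrt 2.
Proof.
  assert (0 < / sqrt 2 < 1).
  { split; [apply Rinv_0_lt_compat; lra |]. rewrite <- Rinv_1. apply Rinv_lt_contravar; lra. }
  unfold Rdiv. nra.
Qed.

Lemma p1_1_factor : p1_1 s x = - ((1 + s * sqrt 2 * x) * (1 - s * sqrt 2 * x - x ^ 2)).
Proof. unfold p1_1. set (r := sqrt 2) in *. clearbody r. clear - s_sq sqrt2_sq. cbn [pow] in *. nsatz. Qed.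

Lemma system1_F_deriv :
  derivable_pt_lim (fun x => - 2 * ln (1 + s * sqrt 2 * x) - 3 / 2 * ln (1 - s * sqrt 2 * x - x ^ 2)) x
    (urabe_f (p1_1 s) (dp1_1 s) (q2_1 s) x).
Proof.
  apply is_derive_Reals. unfold Rminus. auto_derive.
  { cbn [pow] in *. repeat split; lra. }
  unfold urabe_f, dp1_1, q2_1. rewrite p1_1_factor.
  set (r := sqrt 2) in *. clearbody r.
  field_simplify_eq; [clear - s_sq sqrt2_sq; cbn [pow] in *; nsatz | repeat split; lra].
Qed.

Lemma system1_exp_2F :
  exp (2 * (- 2 * ln (1 + s * sqrt 2 * x) - 3 / 2 * ln (1 - s * sqrt 2 * x - x ^ 2)))
  = / ((1 + s * sqrt 2 * x) ^ 4 * (1 - s * sqrt 2 * x - x ^ 2) ^ 3).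
Proof.
  replace (2 * (- 2 * ln (1 + s * sqrt 2 * x) - 3 / 2 * ln (1 - s * sqrt 2 * x - x ^ 2)))
    with (- (INR 4 * ln (1 + s * sqrt 2 * x) + INR 3 * ln (1 - s * sqrt 2 * x - x ^ 2)))
    by (simpl; field).
  rewrite exp_Ropp, exp_plus, !exp_nat_mult, !exp_ln by lra. reflexivity.
Qed.

Lemma system1_exp_F :
  exp (- 2 * ln (1 + s * sqrt 2 * x) - 3 / 2 * ln (1 - s * sqrt 2 * x - x ^ 2))
  = / ((1 + s * sqrt 2 * x) ^ 2 * (1 - s * sqrt 2 * x - x ^ 2)
       * sqrt (1 - s * sqrt 2 * x - x ^ 2)).
Proof.
  replace (- 2 * ln (1 + s * sqrt 2 * x) - 3 / 2 * ln (1 - s * sqrt 2 * x - x ^ 2))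
    with (- (INR 2 * ln (1 + s * sqrt 2 * x) + ln (1 - s * sqrt 2 * x - x ^ 2)
             + / 2 * ln (1 - s * sqrt 2 * x - x ^ 2))) by (simpl; field).
  rewrite exp_Ropp, !exp_plus, exp_nat_mult, !exp_ln by lra.
  change (exp (/ 2 * ln (1 - s * sqrt 2 * x - x ^ 2))) with (Rpower (1 - s * sqrt 2 * x - x ^ 2) (/ 2)).
  now rewrite Rpower_sqrt by lra.
Qed.

Lemma system1_Phi_deriv :
  derivable_pt_lim (fun x => / 2 * (x * (1 + s * x / sqrt 2)) ^ 2
                             / ((1 + s * sqrt 2 * x) ^ 2 * (1 - s * sqrt 2 * x - x ^ 2))) x
    (urabe_g (p1_1 s) (q0_1 s) x
     * exp (2 * (- 2 * ln (1 + s * sqrt 2 * x) - 3 / 2 * ln (1 - s * sqrt 2 * x - x ^ 2)))).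
Proof.
  rewrite system1_exp_2F. apply is_derive_Reals. auto_derive.
  { cbn [pow] in *. apply Rgt_not_eq, Rmult_lt_0_compat; [apply Rmult_lt_0_compat |]; lra. }
  unfold urabe_g, q0_1. rewrite p1_1_factor.
  set (r := sqrt 2) in *. clearbody r.
  field_simplify_eq; [clear - s_sq sqrt2_sq; cbn [pow] in *; nsatz | repeat split; lra].
Qed.

Ltac xi_algebra :=
  unfold sys1_xi; set (sg := sqrt (1 - s * sqrt 2 * x - x ^ 2)) in *;
  set (r := sqrt 2) in *; clearbody sg r;
  field_simplify_eq; [clear - s_sq sqrt2_sq sqrtM_sq; cbn [pow] in *; nsatz | repeat split; lra].

Lemma system1_xi_sq : / 2 * sys1_xi x ^ 2 = / 2 * (x * (1 + s * x / sqrt 2)) ^ 2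
  / ((1 + s * sqrt 2 * x) ^ 2 * (1 - s * sqrt 2 * x - x ^ 2)).
Proof. xi_algebra. Qed.

Lemma system1_xi_pos : x <> 0 -> 0 < x * sys1_xi x.
Proof.
  intros Hx. unfold sys1_xi. assert (0 < x * x) by nra.
  replace (x * (x * (1 + s * x / sqrt 2) / ((1 + s * sqrt 2 * x) * sqrt (1 - s * sqrt 2 * x - x ^ 2))))
    with (x * x * (1 + s * x / sqrt 2) / ((1 + s * sqrt 2 * x) * sqrt (1 - s * sqrt 2 * x - x ^ 2)))
    by (unfold Rdiv; ring).
  apply Rdiv_lt_0_compat; apply Rmult_lt_0_compat; lra.
Qed.

Lemma system1_sqrt_xi : sqrt (2 + 9 * sys1_xi x ^ 2) = ((1 + s * sqrt 2 * x) ^ 2 + 3)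
  / (2 * sqrt 2 * (1 + s * sqrt 2 * x) * sqrt (1 - s * sqrt 2 * x - x ^ 2)).
Proof.
  rewrite <- sqrt_square.
  2: { apply Rlt_le, Rdiv_lt_0_compat; [pose proof (pow2_ge_0 (1 + s * sqrt 2 * x)); lra |].
       repeat apply Rmult_lt_0_compat; lra. }
  f_equal. xi_algebra.
Qed.

Lemma system1_xi_rel : sys1_xi x / (1 + h1 s (sys1_xi x))
  = urabe_g (p1_1 s) (q0_1 s) x
    * exp (- 2 * ln (1 + s * sqrt 2 * x) - 3 / 2 * ln (1 - s * sqrt 2 * x - x ^ 2)).
Proof.
  assert (HL3 : 0 < (1 + s * sqrt 2 * x) ^ 2 + 3) by (pose proof (pow2_ge_0 (1 + s * sqrt 2 * x)); lra).
  assert (Hh : 1 + h1 s (sys1_xi x) = 4 / ((1 + s * sqrt 2 * x) ^ 2 + 3)).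
  { unfold h1. rewrite system1_sqrt_xi. xi_algebra. }
  rewrite Hh, system1_exp_F. unfold urabe_g, q0_1. rewrite p1_1_factor. xi_algebra.
Qed.
End System1Urabe.

Theorem system1_urabe :
  is_urabe_function (urabe_f (p1_1 s) (dp1_1 s) (q2_1 s)) (urabe_g (p1_1 s) (q0_1 s)) (h1 s).
Proof.
  split; [exact h1_odd | split].
  { apply (monomial_inv_sqrt_analytic (h1 s) (- s / sqrt 2) (9 / 2) 1 2); [lia |].
    intros u. unfold h1. pose proof (pow2_ge_0 u).
    replace (2 + 9 * u ^ 2) with (2 * (1 + 9 / 2 * u ^ 2)) by field.
    rewrite sqrt_mult by lra.
    assert (0 < sqrt (1 + 9 / 2 * u ^ 2)) by (apply sqrt_lt_R0; lra). field. lra. }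
  exists (/ 10). split; [lra |].
  exists (fun x => - 2 * ln (1 + s * sqrt 2 * x) - 3 / 2 * ln (1 - s * sqrt 2 * x - x ^ 2)),
         (fun x => / 2 * (x * (1 + s * x / sqrt 2)) ^ 2
                   / ((1 + s * sqrt 2 * x) ^ 2 * (1 - s * sqrt 2 * x - x ^ 2))),
         sys1_xi.
  split; [| split].
  - rewrite pow_i, Rmult_0_r, Rplus_0_r, !Rminus_0_r, ln_1 by lia. ring.
  - unfold Rdiv. ring.
  - intros x Hx. split; [| split; [| split; [| split]]].
    + apply system1_F_deriv; lra.
    + apply system1_Phi_deriv; lra.
    + apply system1_xi_sq; lra.
    + apply system1_xi_pos; lra.
    + apply system1_xi_rel; lra.
Qed.
End System1.

Theorem mainTheorem1 :
  (forall s : R, (s = 1 \/ s = -1) ->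
     (forall x y, P1 s x y = 0 + p1_1 s x * y /\
                  Q1 s x y = q0_1 s x + 0 * y + q2_1 s x * y ^ 2) /\
     p1_1 s 0 <> 0 /\
     (forall x, derivable_pt_lim (p1_1 s) x (dp1_1 s x)) /\
     is_isochronous_center (P1 s) (Q1 s) /\
     is_urabe_function (urabe_f (p1_1 s) (dp1_1 s) (q2_1 s))
                       (urabe_g (p1_1 s) (q0_1 s)) (h1 s)) /\
  ((forall x y, P2 x y = 0 + p1_2 x * y /\
                Q2 x y = q0_2 x + 0 * y + q2_2 x * y ^ 2) /\
   p1_2 0 <> 0 /\
   (forall x, derivable_pt_lim p1_2 x (dp1_2 x)) /\
   is_isochronous_center P2 Q2 /\
   is_urabe_function (urabe_f p1_2 dp1_2 q2_2) (urabe_g p1_2 q0_2) h2).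
Proof.
  split; [intros s Hs; split; [| split; [| split; [| split]]] | split; [| split; [| split; [| split]]]].
  - intros x y. unfold P1, Q1, p1_1, q0_1, q2_1. split; ring.
  - unfold p1_1. rewrite pow_i by lia. lra.
  - intros x. apply is_derive_Reals. unfold p1_1, dp1_1. auto_derive; [easy | ring].
  - now apply system1_isochronous_center.
  - now apply system1_urabe.
  - intros x y. unfold P2, Q2, p1_2, q0_2, q2_2. split; ring.
  - unfold p1_2. rewrite pow_i by lia. lra.
  - intros x. apply is_derive_Reals. unfold p1_2, dp1_2. auto_derive; [easy | ring].
  - exact system2_isochronous_center.
  - exact system2_urabe.
Qed.
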